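(* If $X$ satisfies $selSS^*_{cd}(\mathcal{O},\mathcal{O})$ (i.e. $X$ is strongly selectively $(a)$), has countable extent, and $|X|<\mathfrak{b}$, then $X$ is selectively strongly star-Menger.
   Context: All spaces are regular. $St(A,\mathcal{U})=\bigcup\{U\in\mathcal{U}:U\cap A\neq\emptyset\}$. $\mathfrak{b}$ is the bounding number. $X$ has countable extent if every closed discrete subset of $X$ is countable. $selSS^*_{cd}(\mathcal{O},\mathcal{O})$: for every sequence $(\mathcal{U}_n:n\in\omega)$ of open covers and every sequence $(D_n:n\in\omega)$ of dense subsets of $X$ there are sets $C_n\subseteq D_n$, closed and discrete in $X$, such that $\{St(C_n,\mathcal{U}_n):n\in\omega\}$ covers $X$. $X$ is selectively strongly star-Menger if for every sequence $(\mathcal{U}_n)$ of open covers and every sequence $(D_n)$ of dense subsets there are finite $F_n\subseteq D_n$ with $\{St(F_n,\mathcal{U}_n):n\in\omega\}$ covering $X$. *)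

From HB Require Import structures.
From mathcomp Require Import all_boot all_order all_algebra.
From mathcomp Require Import all_classical all_reals all_analysis.
Set Implicit Arguments. Unset Strict Implicit. Unset Printing Implicit Defensive.
Local Open Scope classical_set_scope.

Definition open_cover {X : topologicalType} (U : set (set X)) : Prop :=
  (forall V, U V -> open V) /\ \bigcup_(V in U) V = setT.

Definition St {X : topologicalType} (A : set X) (U : set (set X)) : set X :=
  \bigcup_(V in [set V | U V /\ V `&` A !=set0]) V.

Definition closed_discrete {X : topologicalType} (C : set X) : Prop :=
  closed C /\ forall c, C c -> exists V, open V /\ V c /\ V `&` C = [set c].

Definition countable_extent (X : topologicalType) : Prop :=
  forall C : set X, closed_discrete C -> countable C.

(* |X| < b : every family of functions in omega^omega indexed by X
   is <=*-bounded (eventually dominated by a single function). *)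
Definition card_lt_bounding_number (X : Type) : Prop :=
  forall f : X -> (nat -> nat), exists g : nat -> nat,
    forall x, exists N, forall n, (N <= n)%N -> (f x n <= g n)%N.

Definition selSS_cd (X : topologicalType) : Prop :=
  forall (U : nat -> set (set X)) (D : nat -> set X),
    (forall n, open_cover (U n)) -> (forall n, dense (D n)) ->
    exists C : nat -> set X,
      (forall n, C n `<=` D n /\ closed_discrete (C n)) /\
      \bigcup_n St (C n) (U n) = setT.

Definition sel_strongly_star_Menger (X : topologicalType) : Prop :=
  forall (U : nat -> set (set X)) (D : nat -> set X),
    (forall n, open_cover (U n)) -> (forall n, dense (D n)) ->
    exists F : nat -> set X,
      (forall n, F n `<=` D n /\ finite_set (F n)) /\
      \bigcup_n St (F n) (U n) = setT.

From mathcomp Require Import all_boot all_order all_algebra.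
From mathcomp Require Import all_classical all_reals all_analysis.
Local Open Scope classical_set_scope.

(* Fix a cover U_m and a dense set D_m.  Applying selSS*_cd to
   the constant sequences (U_m) and (D_m) yields closed discrete sets
   C_{m,j} in D_m whose stars cover X; by countable extent their union E_m
   is a countable subset of D_m with St(E_m, U_m) = X ("countable kernel").
   Enumerate each E_m injectively.  For every point x and every m choose
   some e in E_m whose star contains x, and let h_x(m) be its index; since
   |X| < b the family (h_x) is eventually dominated by one g.  Then
   F_m = { e in E_m : index(e) <= g(m) } is finite, and each x lies in
   St(F_m, U_m) for all large m. *)

Section Stars.
Context {X : topologicalType}.

Lemma St_subset (A B : set X) (U : set (set X)) :
  A `<=` B -> St A U `<=` St B U.
Proof.
move=> AB x [V [UV [a [Va Aa]]] Vx].
by exists V => //; split => //; exists a; split => //; apply: AB.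
Qed.

Lemma St_witness (A : set X) (U : set (set X)) (x : X) :
  St A U x -> exists2 e, A e & St [set e] U x.
Proof.
move=> [V [UV [e [Ve Ae]]] Vx].
by exists e => //; exists V => //; split => //; exists e.
Qed.

End Stars.

Lemma finite_bounded_index (T : Type) (E : set T) (f : T -> nat) (k : nat) :
  {in E &, injective f} -> finite_set [set e | E e /\ (f e <= k)%N].
Proof.
move=> f_inj.
rewrite (eq_finite_set (card_esym (inj_card_eq (f := f) _))).
  apply: (@sub_finite_set _ _ `I_k.+1); last exact: finite_II.
  by move=> _ [e [_ fek] <-] /=; rewrite ltnS.
move=> a b; rewrite !inE => -[Ea _] [Eb _]; apply: f_inj; by rewrite inE.
Qed.

Lemma countable_star_kernel {X : topologicalType} :
  selSS_cd X -> countable_extent X ->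
  forall (U : set (set X)) (D : set X), open_cover U -> dense D ->
  exists E : set X, [/\ countable E, E `<=` D & St E U = setT].
Proof.
move=> selX extX U D coverU denseD.
have [C [CD coverC]] :=
  selX (fun=> U) (fun=> D) (fun=> coverU) (fun=> denseD).
exists (\bigcup_j C j); split.
- apply: bigcup_countable => // j _.
  by apply: extX; case: (CD j).
- by move=> x [j _ Cx]; case: (CD j) => + _; apply.
- apply/seteqP; split => // x _.
  have [j _ Stx] : (\bigcup_n St (C n) U) x by rewrite coverC.
  by apply: St_subset Stx => y Cy; exists j.
Qed.

Lemma star_Menger_of_countable_kernels {X : topologicalType} :
  (forall (U : set (set X)) (D : set X), open_cover U -> dense D ->
     exists E : set X, [/\ countable E, E `<=` D & St E U = setT]) ->
  card_lt_bounding_number X -> sel_strongly_star_Menger X.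
Proof.
move=> kernel bX U D coverU denseD.
have [E HE] := choice (fun m => kernel (U m) (D m) (coverU m) (denseD m)).
have enumE m : exists f : X -> nat, {in E m &, injective f}.
  by apply/countable_injP; case: (HE m).
have [idx idx_inj] := choice enumE.
have centre x m : exists e, E m e /\ St [set e] (U m) x.
  have [_ _ coverE] := HE m.
  have /St_witness[e Ee Ste] : St (E m) (U m) x by rewrite coverE.
  by exists e.
have centres x : exists wx : nat -> X,
    forall m, E m (wx m) /\ St [set wx m] (U m) x.
  by have [wx Hwx] := choice (centre x); exists wx.
have [w w_spec] := choice centres.
have [g g_bound] := bX (fun x m => idx m (w x m)).
exists (fun m => [set e | E m e /\ (idx m e <= g m)%N]); split.
  move=> m; split; last exact: finite_bounded_index.
  by move=> e [Ee _]; case: (HE m) => _ + _; apply.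
apply/seteqP; split => // x _.
have [N HN] := g_bound x.
have [EwN StwN] := w_spec x N.
exists N => //; apply: St_subset StwN => _ ->; split => //.
exact: HN.
Qed.

Theorem mainTheorem14 (X : topologicalType) :
  regular_space X -> selSS_cd X -> countable_extent X ->
  card_lt_bounding_number X -> sel_strongly_star_Menger X.
Proof.
move=> _ selX extX bX.
exact: star_Menger_of_countable_kernels (countable_star_kernel selX extX) bX.
Qed.
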